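(* Let $P'$ be a finite totally ordered subset of $\mathbb{Q}$ with minimum $0$ and maximum $n$ that contains $\{0,1,\dots,n\}$, and let $L'=P'\times P'$, $L_n=\{0,\dots,n\}^2$ (product orders). Let $g:L_n\to L'$ be the inclusion and $f:L'\to L_n$, $f(a_1,a_2)=(\lceil a_1\rceil,\lceil a_2\rceil)$. Let $F:L'\to\Delta K$ and $G:L_n\to\Delta K$ be filtrations with $G=F\circ g$. Then for any $x\le y$ in $L_n$ and every dimension $q$, \[\mathsf{Dgm}_qG[x,y]=\sum_{[a,b]\in\mathsf{Int}\,L',\ f(a)=x,\ f(b)=y}\mathsf{Dgm}_qF[a,b].\]
   Context: $K$ is a finite simplicial complex, coefficients in a field; $\Delta K$ is the poset of subcomplexes of $K$. For a finite poset $P$ with least element $\bot$ and greatest $\top$: $\mathsf{Int}\,P=\{[a,b]:a\le b\}$ with $[a,b]\le[c,d]$ iff $a\le c$, $b\le d$; a $P$-filtration is a monotone map $F:P\to\Delta K$ with $F(\bot)=\emptyset$, $F(\top)=K$; $ZB_qF[a,b]=\dim(Z_qF(a)\cap B_qF(b))$ for $b\ne\top$ and $\dim Z_qF(a)$ for $b=\top$ ($Z_q,B_q$ = $q$-cycles, $q$-boundaries); $\mathsf{Dgm}_qF$ is the unique function on $\mathsf{Int}\,P$ with $ZB_qF[c,d]=\sum_{[a,b]\le[c,d]}\mathsf{Dgm}_qF[a,b]$. *)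

From HB Require Import structures.
From mathcomp Require Import all_boot all_order all_algebra.
Set Implicit Arguments. Unset Strict Implicit. Unset Printing Implicit Defensive.
Import Order.TTheory GRing.Theory Num.Theory.
Local Open Scope ring_scope.

Definition is_complex (V : finType) (K : {set {set V}}) : Prop :=
  set0 \notin K /\
  (forall s t : {set V}, s \in K -> t \subset s -> t != set0 -> t \in K).

Definition is_subcomplex (V : finType) (K L : {set {set V}}) : Prop :=
  is_complex L /\ L \subset K.

Definition qsimp (V : finType) (L : {set {set V}}) (q : nat) : {set {set V}} :=
  [set s in L | #|s| == q.+1].

Section Chains.
Variables (k : fieldType) (V : finType).

(* chains: k-valued functions on all subsets of V (chains of L are those
   supported on simplices of L) *)
Definition chain := {ffun {set V} -> k^o}.

Definition chain_basis (s : {set V}) : chain := [ffun t => (t == s)%:R].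

(* position of vertex v in the (ordered) simplex s; vertices are ordered
   by enum_rank, which fixes the orientation of simplices *)
Definition vpos (v : V) (s : {set V}) : nat :=
  #|[set u in s | (enum_rank u < enum_rank v)%N]|.

(* simplicial boundary: d(s) = sum_i (-1)^i (s minus its i-th vertex),
   and d = 0 on 0-simplices (non-augmented) *)
Definition bd_fun (c : chain) : chain :=
  [ffun t => \sum_(s : {set V}) \sum_(v in s | (1 < #|s|)%N && (s :\ v == t))
               (-1) ^+ vpos v s * c s].

Definition bd : 'End(chain) := linfun bd_fun.

Definition chain_span (S : {set {set V}}) : {vspace chain} :=
  <<[seq chain_basis s | s <- enum S]>>%VS.

Definition Zq (L : {set {set V}}) (q : nat) : {vspace chain} :=
  (lker bd :&: chain_span (qsimp L q))%VS.

Definition Bq (L : {set {set V}}) (q : nat) : {vspace chain} :=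
  (bd @: chain_span (qsimp L q.+1))%VS.

End Chains.

Definition is_filtration (V : finType) (K : {set {set V}})
  (T : finType) (le : rel T) (bot top : T) (F : T -> {set {set V}}) : Prop :=
  [/\ forall a, is_subcomplex K (F a),
      forall a b, le a b -> F a \subset F b,
      F bot = set0 & F top = K].

Definition ZB (k : fieldType) (V : finType) (T : finType) (top : T)
  (F : T -> {set {set V}}) (q : nat) (a b : T) : nat :=
  if b == top then \dim (Zq k (F a) q)
  else \dim (Zq k (F a) q :&: Bq k (F b) q)%VS.

(* D is the persistence diagram Dgm_q F : Int P -> Z, i.e. (the unique
   function on intervals [a,b], a <= b) satisfying
   ZB_q F[c,d] = sum_{[a,b] <= [c,d]} D[a,b]  for all [c,d] in Int P. *)
Definition is_Dgm (k : fieldType) (V : finType) (T : finType) (le : rel T)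
  (top : T) (F : T -> {set {set V}}) (q : nat) (D : T -> T -> int) : Prop :=
  forall c d, le c d ->
    ((ZB k top F q c d)%:Z =
       \sum_(a : T) \sum_(b : T | [&& le a b, le a c & le b d]) D a b)%R.

Definition Lp (P : seq rat) := (seq_sub P * seq_sub P)%type.
Definition lep (P : seq rat) : rel (Lp P) :=
  fun a b => (ssval a.1 <= ssval b.1) && (ssval a.2 <= ssval b.2).

Definition Ln (n : nat) := ('I_n.+1 * 'I_n.+1)%type.
Definition len (n : nat) : rel (Ln n) :=
  fun x y => (x.1 <= y.1)%N && (x.2 <= y.2)%N.
Definition botn (n : nat) : Ln n := (ord0, ord0).
Definition topn (n : nat) : Ln n := (ord_max, ord_max).

(* f(a1,a2) = (ceil a1, ceil a2) == x, compared as integers *)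
Definition f_eq (P : seq rat) (n : nat) (a : Lp P) (x : Ln n) : bool :=
  (Num.ceil (ssval a.1) == (x.1 : nat)%:Z) && (Num.ceil (ssval a.2) == (x.2 : nat)%:Z).

From HB Require Import structures.
From mathcomp Require Import all_boot all_order all_algebra.
Set Implicit Arguments. Unset Strict Implicit. Unset Printing Implicit Defensive.
Import Order.TTheory GRing.Theory Num.Theory.
Local Open Scope ring_scope.

(* The ceiling map f : L' -> L_n is left adjoint to the inclusion g : L_n -> L',
   i.e. f a <= c iff a <= g c.  Hence pushing Dgm_q F forward along f yields a
   function on Int L_n whose cumulative sum over [c, d] is the cumulative sum of
   Dgm_q F over [g c, g d], namely ZB_q F[g c, g d] = ZB_q G[c, d].  A function on
   intervals is determined by its cumulative sums (Moebius inversion on Int L_n),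
   so this pushforward is Dgm_q G. *)

Section IntervalSum.
Variables (T : finType) (le : rel T) (R : zmodType).

Definition interval_sum (D : T -> T -> R) (c d : T) : R :=
  \sum_(a : T) \sum_(b : T | [&& le a b, le a c & le b d]) D a b.

Definition interval_below (c d : T) : {set T * T} :=
  [set p | [&& le p.1 p.2, le p.1 c & le p.2 d]].

Lemma interval_sumE D c d :
  interval_sum D c d = \sum_(p in interval_below c d) D p.1 p.2.
Proof.
rewrite /interval_sum (pair_big_dep xpredT) /=.
by apply: eq_bigl => p; rewrite inE.
Qed.

Hypotheses (le_refl : reflexive le) (le_anti : antisymmetric le)
  (le_trans : transitive le).

Lemma interval_below_proper a b c d : le c d ->
  (a, b) \in interval_below c d -> (a, b) != (c, d) ->
  interval_below a b \proper interval_below c d.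
Proof.
move=> cd; rewrite inE /= => /and3P[_ ac bd] neq; apply/properP; split.
  apply/subsetP => -[a' b']; rewrite !inE /= => /and3P[-> a'a b'b].
  by rewrite (le_trans a'a ac) (le_trans b'b bd).
exists (c, d); first by rewrite inE /= cd !le_refl.
rewrite inE /=; apply/and3P => -[_ ca db]; move: neq.
by rewrite (@le_anti a c) ?ca ?ac // (@le_anti b d) ?db ?bd // eqxx.
Qed.

Lemma interval_sum_inj (E E' : T -> T -> R) :
  (forall c d, le c d -> interval_sum E c d = interval_sum E' c d) ->
  forall c d, le c d -> E c d = E' c d.
Proof.
move=> eqE; suff IH m c d : (#|interval_below c d| < m)%N -> le c d -> E c d = E' c d.
  by move=> c d; apply: IH (ltnSn _).
elim: m c d => // m IH c d lt_m cd.
have cd_in : (c, d) \in interval_below c d by rewrite inE /= cd !le_refl.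
have := eqE c d cd; rewrite !interval_sumE !(bigD1 (c, d) cd_in) /=.
rewrite (eq_bigr (fun p => E' p.1 p.2)) => [/addIr //|[a b] /andP[ab_in neq]].
have {}ab_in : (a, b) \in interval_below c d := ab_in.
apply: IH; last by move: ab_in; rewrite inE => /and3P[].
rewrite ltnS in lt_m; apply: leq_trans lt_m; apply: proper_card.
exact: interval_below_proper.
Qed.
End IntervalSum.

Section Pushforward.
Variables (T U : finType) (leT : rel T) (leU : rel U) (f : T -> U) (g : U -> T).
Hypotheses (leT_trans : transitive leT) (leU_refl : reflexive leU).
Hypothesis f_adj_g : forall a c, leT a (g c) = leU (f a) c.

Definition pushforward (R : zmodType) (D : T -> T -> R) (x y : U) : R :=
  \sum_(a : T) \sum_(b : T | [&& leT a b, f a == x & f b == y]) D a b.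

Lemma left_adjoint_homo : {homo f : a b / leT a b >-> leU a b}.
Proof.
by move=> a b ab; rewrite -f_adj_g (leT_trans ab) // f_adj_g leU_refl.
Qed.

Lemma interval_sum_pushforward (R : zmodType) (D : T -> T -> R) c d :
  interval_sum leU (pushforward D) c d = interval_sum leT D (g c) (g d).
Proof.
rewrite !interval_sumE.
rewrite (partition_big (fun p => (f p.1, f p.2)) (mem (interval_below leU c d))) /=.
  apply: eq_bigr => -[x y]; rewrite inE /= => /and3P[_ xc yd].
  rewrite /pushforward (pair_big_dep xpredT) /=; apply: eq_bigl => -[a b] /=.
  rewrite inE /= !f_adj_g xpair_eqE.
  by case: eqP => [->|]; case: eqP => [->|]; rewrite ?andbF //= xc yd !andbT.
move=> [a b]; rewrite !inE /= !f_adj_g => /and3P[ab -> ->].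
by rewrite left_adjoint_homo.
Qed.
End Pushforward.

Lemma ZB_comp (k : fieldType) (V T U : finType) (topT : T) (topU : U)
    (F : T -> {set {set V}}) (G : U -> {set {set V}}) (g : U -> T) q c d :
  (forall x, G x = F (g x)) -> (g d == topT) = (d == topU) ->
  ZB k topU G q c d = ZB k topT F q (g c) (g d).
Proof. by move=> eqG g_top; rewrite /ZB g_top !eqG. Qed.

Section CeilOrd.
Variables (R : archiFieldType) (n : nat).

Definition ceil_ord (r : R) : 'I_n.+1 := inord `|Num.ceil r|%N.

Lemma ceil_ordE r : 0 <= r <= n%:R -> (ceil_ord r : nat)%:Z = Num.ceil r.
Proof.
case/andP=> r_ge0 r_le_n.
have ceil_ge0 : 0 <= Num.ceil r by rewrite ceil_ge0 (lt_le_trans _ r_ge0) ?ltrN10.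
rewrite inordK ?gez0_abs // ltnS -lez_nat gez0_abs // ceil_le_int.
by rewrite -[X in _ <= X]pmulrn.
Qed.

Lemma ceil_ord_le r (c : 'I_n.+1) : 0 <= r <= n%:R -> (ceil_ord r <= c)%N = (r <= c%:R).
Proof. by move=> /ceil_ordE ceilE; rewrite -lez_nat ceilE ceil_le_int -pmulrn. Qed.
End CeilOrd.

Lemma len_refl n : reflexive (@len n).
Proof. by move=> x; rewrite /len !leqnn. Qed.

Lemma len_anti n : antisymmetric (@len n).
Proof.
move=> [x1 x2] [y1 y2] /andP[/andP[/= le_x1 le_x2] /andP[/= le_y1 le_y2]].
by congr pair; apply/val_inj/anti_leq; rewrite ?le_x1 ?le_x2.
Qed.

Lemma len_trans n : transitive (@len n).
Proof.
move=> y x z /andP[xy1 xy2] /andP[yz1 yz2].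
by rewrite /len (leq_trans xy1 yz1) (leq_trans xy2 yz2).
Qed.

Lemma lep_trans P : transitive (@lep P).
Proof.
move=> b a c /andP[ab1 ab2] /andP[bc1 bc2].
by rewrite /lep (le_trans ab1 bc1) (le_trans ab2 bc2).
Qed.

Section GridInclusion.
Variables (n : nat) (P : seq rat).
Hypothesis P_bounded : forall x, x \in P -> 0 <= x <= n%:R.
Hypothesis P_int : forall i : nat, (i <= n)%N -> i%:R \in P.

Definition ceil_pt (a : Lp P) : Ln n :=
  (ceil_ord n (ssval a.1), ceil_ord n (ssval a.2)).

Definition grid_incl (c : Ln n) : Lp P :=
  (SeqSub (P_int (ltn_ord c.1)), SeqSub (P_int (ltn_ord c.2))).

Lemma f_eq_ceil_pt a x : f_eq a x = (ceil_pt a == x).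
Proof.
case: x => x1 x2; rewrite /f_eq xpair_eqE -!val_eqE /=.
by rewrite -!eqz_nat !ceil_ordE //; apply/P_bounded/ssvalP.
Qed.

Lemma lep_grid_incl a c : lep a (grid_incl c) = len (ceil_pt a) c.
Proof. by rewrite /lep /len /= !ceil_ord_le //; apply/P_bounded/ssvalP. Qed.

Lemma grid_incl_homo : {homo grid_incl : c d / len c d >-> lep c d}.
Proof. by move=> c d /andP[c1 c2]; rewrite /lep /= !ler_nat c1 c2. Qed.

Lemma grid_incl_top (topp : Lp P) d :
  ssval topp.1 = n%:R /\ ssval topp.2 = n%:R ->
  (grid_incl d == topp) = (d == topn n).
Proof.
case: d topp => d1 d2 [t1 t2] /= [top1 top2].
by rewrite !xpair_eqE -!val_eqE /= top1 top2 !val_eqE !eqr_nat.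
Qed.
End GridInclusion.

Theorem mainTheorem8
  (k : fieldType) (V : finType) (K : {set {set V}}) (HK : is_complex K)
  (n : nat) (P : seq rat)
  (HP0 : 0 \in P) (HPn : n%:R \in P)
  (HPb : forall x, x \in P -> 0 <= x <= n%:R)
  (HPint : forall i : nat, (i <= n)%N -> i%:R \in P)
  (botp topp : Lp P)
  (Hbot : ssval botp.1 = 0 /\ ssval botp.2 = 0)
  (Htop : ssval topp.1 = n%:R /\ ssval topp.2 = n%:R)
  (F : Lp P -> {set {set V}}) (G : Ln n -> {set {set V}})
  (HF : is_filtration K (@lep P) botp topp F)
  (HG : is_filtration K (@len n) (botn n) (topn n) G)
  (HGF : forall (x : Ln n) (a : Lp P),
      ssval a.1 = (x.1 : nat)%:R -> ssval a.2 = (x.2 : nat)%:R -> G x = F a)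
  (q : nat) (DF : Lp P -> Lp P -> int) (DG : Ln n -> Ln n -> int)
  (HDF : is_Dgm k (@lep P) topp F q DF)
  (HDG : is_Dgm k (@len n) (topn n) G q DG)
  (x y : Ln n) (Hxy : len x y) :
  DG x y = \sum_(a : Lp P) \sum_(b : Lp P | [&& lep a b, f_eq a x & f_eq b y]) DF a b.
Proof.
transitivity (pushforward (@lep P) (@ceil_pt n P) DF x y).
  apply: (interval_sum_inj (@len_refl n) (@len_anti n) (@len_trans n)) Hxy => c d cd.
  rewrite (interval_sum_pushforward (@lep_trans P) (@len_refl n) (lep_grid_incl HPb HPint)).
  rewrite /interval_sum -HDG // -HDF ?grid_incl_homo //.
  congr Posz; apply: ZB_comp; last exact: grid_incl_top.
  by move=> c'; apply: HGF.
by apply: eq_bigr => a _; apply: eq_bigl => b; rewrite !(f_eq_ceil_pt HPb).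
Qed.
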